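(* Let $n\ge 2$ be an integer, $\tau,\gamma>0$, and $$F(\delta,\phi)=\tau\big[(n-2)(n+\delta)-2\phi(n-1)\delta\big]\big[(2-\delta)(n+\delta)+2\phi(n-1)\delta\big]-\gamma\delta(n+\delta)^{2}.$$ Let $\delta_0=\frac{2\tau(n-2)}{\gamma+\tau(n-2)}$. Then there is a unique smooth function $\delta(\phi)$ near $\phi=0$ with $\delta(0)=\delta_0$ and $F(\delta(\phi),\phi)=0$, and $$\delta(\phi)=\delta_0+\phi\,\frac{2\tau(n-1)\delta_{0}(n-4+\delta_{0})}{\gamma(n+3\delta_{0})+\tau(n-2)(n+3\delta_{0}-4)}+O(\phi^2).$$ Moreover, setting $\alpha(\phi)=(n-2)-(n-1)\phi\frac{2\delta(\phi)}{n+\delta(\phi)}$, $$\alpha(\phi)=(n-2)-\phi\,\frac{4\tau(n-1)(n-2)}{\tau(n+2)(n-2)+\gamma n}+O(\phi^2),$$ so the threshold $R^{cci}=\tau\alpha/\gamma$ satisfies $$R^{cci}=\frac{(n-2)\tau}{\gamma}-\phi\frac{\tau}{\gamma}\left(\frac{4\tau(n-1)(n-2)}{\tau(n+2)(n-2)+\gamma n}\right)+O(\phi^2).$$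
   Context: $F(\delta,\phi)=0$ characterises the non-trivial quasi-equilibrium of the fast variable $\delta=[II]/[I]$ in the pairwise SIR model on an $n$-regular network with clustering coefficient $\phi$ under the compact improved closure; the corresponding $\alpha=[SI]/[I]$ is given by $\alpha=(n-2)-(n-1)\phi\frac{2\delta}{n+\delta}$, and the epidemic threshold is $R^{cci}=\tau\alpha/\gamma$, with $\tau$ the per-link infection rate and $\gamma$ the recovery rate. *)

From Stdlib Require Import Reals Lra.
Open Scope R_scope.

Definition F (n : nat) (tau gamma delta phi : R) : R :=
  tau * ((INR n - 2) * (INR n + delta) - 2 * phi * (INR n - 1) * delta)
      * ((2 - delta) * (INR n + delta) + 2 * phi * (INR n - 1) * delta)
  - gamma * delta * (INR n + delta) ^ 2.

Definition delta0 (n : nat) (tau gamma : R) : R :=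
  2 * tau * (INR n - 2) / (gamma + tau * (INR n - 2)).

(* alpha = [SI]/[I] as a function of delta and phi *)
Definition alpha (n : nat) (delta phi : R) : R :=
  (INR n - 2) - (INR n - 1) * phi * (2 * delta / (INR n + delta)).

Definition Rcci (tau gamma a : R) : R := tau * a / gamma.

Definition smooth_on (a b : R) (f : R -> R) : Prop :=
  exists D : nat -> R -> R,
    (forall x, a < x < b -> D 0%nat x = f x) /\
    (forall (k : nat) (x : R), a < x < b -> derivable_pt_lim (D k) x (D (S k) x)).

Definition bigO2 (h : R -> R) : Prop :=
  exists C e : R, 0 < e /\ forall phi, Rabs phi < e -> Rabs (h phi) <= C * phi ^ 2.

From Stdlib Require Import Reals Lra Lia.
From Coquelicot Require Import Coquelicot.
Open Scope R_scope.

(* F has polynomial divided differences, F(x,φ) - F(y,φ) = (x - y) A(x,y,φ) and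
   F(x,ψ) - F(x,φ) = (ψ - φ) B(x,φ,ψ), with A(δ0,δ0,0) = -(n+δ0)^2 (τ(n-2)+γ) < 0.
   Near (δ0,0) the slope A stays below some -c < 0 and B stays bounded, so F(·,φ) is
   strictly decreasing and changes sign on [δ0 - r, δ0 + r]: the intermediate value
   theorem gives the root δ(φ), monotonicity its uniqueness.  The same two identities
   make δ Lipschitz with δ' = -B(δ,φ,φ)/A(δ,δ,φ); the right-hand side being a rational
   function of δ and φ, δ is C^k for every k.  The expansions are then first-order
   Taylor formulas with δ'(0) = -B(δ0,0,0)/A(δ0,δ0,0), and for α the Lipschitz bound
   alone suffices. *)

Fixpoint Ck_on (a b : R) (k : nat) (f : R -> R) : Prop :=
  match k with
  | O => True
  | S k => exists f', (forall x, a < x < b -> is_derive f x (f' x)) /\ Ck_on a b k f'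
  end.

Section Differentiability.
Variables a b : R.

Lemma Ck_on_S k f : Ck_on a b (S k) f -> Ck_on a b k f.
Proof.
  revert f; induction k as [|k IH]; intros f [f' [Hf Hf']]; [exact I|].
  exists f'; split; auto.
Qed.

Lemma Ck_on_const k c : Ck_on a b k (fun _ => c).
Proof.
  revert c; induction k as [|k IH]; intros c; [exact I|].
  exists (fun _ => 0); split; [|apply IH].
  intros x _; exact (@is_derive_const R_AbsRing R_NormedModule c x).
Qed.

Lemma Ck_on_id k : Ck_on a b k (fun x => x).
Proof.
  destruct k as [|k]; [exact I|].
  exists (fun _ => 1); split; [|apply Ck_on_const].
  intros x _; exact (@is_derive_id R_AbsRing x).
Qed.

Lemma Ck_on_plus k f g : Ck_on a b k f -> Ck_on a b k g -> Ck_on a b k (fun x => f x + g x).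
Proof.
  revert f g; induction k as [|k IH]; intros f g; [auto|].
  intros [f' [Hf Hf']] [g' [Hg Hg']].
  exists (fun x => f' x + g' x); split; auto.
  intros x Hx; exact (is_derive_plus f g x _ _ (Hf x Hx) (Hg x Hx)).
Qed.

Lemma Ck_on_opp k f : Ck_on a b k f -> Ck_on a b k (fun x => - f x).
Proof.
  revert f; induction k as [|k IH]; intros f; [auto|].
  intros [f' [Hf Hf']].
  exists (fun x => - f' x); split; auto.
  intros x Hx; exact (is_derive_opp f x _ (Hf x Hx)).
Qed.

Lemma Ck_on_mult k f g : Ck_on a b k f -> Ck_on a b k g -> Ck_on a b k (fun x => f x * g x).
Proof.
  revert f g; induction k as [|k IH]; intros f g; [auto|].
  intros Hf Hg.
  pose proof (Ck_on_S _ _ Hf) as Hfk; pose proof (Ck_on_S _ _ Hg) as Hgk.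
  destruct Hf as [f' [Hf Hf']], Hg as [g' [Hg Hg']].
  exists (fun x => f' x * g x + f x * g' x); split.
  - intros x Hx. apply (is_derive_mult f g x _ _ (Hf x Hx) (Hg x Hx)).
    intros; apply Rmult_comm.
  - apply Ck_on_plus; apply IH; auto.
Qed.

Lemma Ck_on_inv k f : (forall x, a < x < b -> f x <> 0) ->
  Ck_on a b k f -> Ck_on a b k (fun x => / f x).
Proof.
  revert f; induction k as [|k IH]; intros f Hnz; [auto|].
  intros Hf. pose proof (Ck_on_S _ _ Hf) as Hfk.
  destruct Hf as [f' [Hf Hf']].
  exists (fun x => - f' x * (/ f x * / f x)); split.
  - intros x Hx.
    replace (- f' x * (/ f x * / f x)) with (- f' x / f x ^ 2) by (field; auto).
    apply is_derive_inv; auto.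
  - apply Ck_on_mult; [apply Ck_on_opp; auto | apply Ck_on_mult; apply IH; auto].
Qed.

Lemma Ck_on_div k f g : (forall x, a < x < b -> g x <> 0) ->
  Ck_on a b k f -> Ck_on a b k g -> Ck_on a b k (fun x => f x / g x).
Proof. intros; apply Ck_on_mult; auto; apply Ck_on_inv; auto. Qed.

Lemma locally_open_interval x : a < x < b -> locally x (fun y => a < y < b).
Proof. apply (open_and _ _ (open_gt a) (open_lt b)). Qed.

Lemma Ck_on_is_derive_Derive_n k f : Ck_on a b (S k) f ->
  forall x, a < x < b -> is_derive (Derive_n f k) x (Derive_n f (S k) x).
Proof.
  revert f; induction k as [|k IH]; intros f Hf x Hx;
    destruct Hf as [f' [Hf Hf']].
  - change (is_derive f x (Derive f x)).
    rewrite (is_derive_unique _ _ _ (Hf x Hx)). exact (Hf x Hx).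
  - assert (Hshift : forall j y, a < y < b -> Derive_n f (S j) y = Derive_n f' j y).
    { intros j y Hy. replace (S j) with (j + 1)%nat by lia. rewrite <- Derive_n_comp.
      apply Derive_n_ext_loc.
      apply (filter_imp (fun z => a < z < b)); [|apply locally_open_interval; auto].
      intros z Hz; apply is_derive_unique, Hf, Hz. }
    rewrite Hshift by auto.
    apply is_derive_ext_loc with (f := Derive_n f' k); [|apply IH; auto].
    apply (filter_imp (fun z => a < z < b)); [|apply locally_open_interval; auto].
    intros z Hz; symmetry; apply Hshift, Hz.
Qed.

Lemma smooth_on_Ck_on f : (forall k, Ck_on a b k f) -> smooth_on a b f.
Proof.
  intros Hf. exists (Derive_n f); split; [reflexivity|].
  intros k x Hx. apply is_derive_Reals, (Ck_on_is_derive_Derive_n k); auto.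
Qed.

Lemma smooth_on_continuous f x : a < x < b -> smooth_on a b f -> continuous f x.
Proof.
  intros Hx [D [HD0 HD]].
  apply continuous_ext_loc with (D 0%nat).
  - apply (filter_imp (fun z => a < z < b)); [|apply locally_open_interval; auto].
    intros; apply HD0; auto.
  - apply (@ex_derive_continuous R_AbsRing R_NormedModule).
    exists (D 1%nat x). apply is_derive_Reals, HD, Hx.
Qed.

End Differentiability.

Lemma continuous_bounded_on (f : R -> R) a b : a <= b ->
  (forall x, a <= x <= b -> continuity_pt f x) ->
  exists M, forall x, a <= x <= b -> Rabs (f x) <= M.
Proof.
  intros Hab Hf.
  destruct (continuity_ab_maj f a b Hab Hf) as [xmax [Hmax _]].
  destruct (continuity_ab_min f a b Hab Hf) as [xmin [Hmin _]].
  exists (Rabs (f xmax) + Rabs (f xmin)). intros x Hx.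
  specialize (Hmax x Hx); specialize (Hmin x Hx).
  pose proof (Rle_abs (f xmax)); pose proof (Rabs_pos (f xmax)).
  pose proof (Rle_abs (- f xmin)); pose proof (Rabs_pos (f xmin)).
  rewrite Rabs_Ropp in *.
  apply Rabs_le; lra.
Qed.

Lemma smooth_on_taylor1 e f y0 l : 0 < e -> smooth_on (- e) e f ->
  f 0 = y0 -> derivable_pt_lim f 0 l -> bigO2 (fun p => f p - (y0 + p * l)).
Proof.
  intros He [D [HD0 HD]] Hy0 Hl. subst y0.
  assert (Hl1 : l = D 1%nat 0).
  { apply (uniqueness_limite f 0); auto.
    apply is_derive_Reals, (is_derive_ext_loc (D 0%nat)).
    - apply (filter_imp (fun x => - e < x < e)); [|apply locally_open_interval; lra].
      intros; apply HD0; auto.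
    - apply is_derive_Reals, HD; lra. }
  destruct (continuous_bounded_on (D 2%nat) (- (e / 2)) (e / 2)) as [M HM]; [lra| |].
  { intros x Hx. apply derivable_continuous_pt. exists (D 3%nat x). apply HD; lra. }
  assert (HM0 : 0 <= M)
    by (apply Rle_trans with (Rabs (D 2%nat 0)); [apply Rabs_pos | apply HM; lra]).
  exists M, (e / 2); split; [lra|]. intros p Hp.
  assert (Hin : forall t, Rabs t <= Rabs p -> - (e / 2) <= t <= e / 2)
    by (intros t Ht; apply Rabs_le_between; lra).
  assert (HD1 : forall t, Rabs t <= Rabs p -> Rabs (D 1%nat t - D 1%nat 0) <= M * Rabs p).
  { intros t Ht. apply Rle_trans with (M * Rabs (t - 0)).
    - apply (bounded_variation (D 1%nat) (D 2%nat)). intros u Hu. rewrite !Rminus_0_r in Hu. split.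
      + apply is_derive_Reals, HD. apply Rabs_lt_between. lra.
      + apply HM, Hin. lra.
    - rewrite Rminus_0_r. apply Rmult_le_compat_l; auto. }
  pose proof (proj1 (Rabs_lt_between p (e / 2)) Hp).
  rewrite <- (HD0 p), <- (HD0 0), Hl1 by lra.
  replace (D 0%nat p - (D 0%nat 0 + p * D 1%nat 0))
    with ((D 0%nat p - D 1%nat 0 * p) - (D 0%nat 0 - D 1%nat 0 * 0)) by ring.
  replace (M * p ^ 2) with (M * Rabs p * Rabs (p - 0))
    by (rewrite Rminus_0_r, Rmult_assoc, <- Rabs_mult, Rabs_right; [ring | nra]).
  apply (bounded_variation (fun x => D 0%nat x - D 1%nat 0 * x) (fun x => D 1%nat x - D 1%nat 0)).
  intros t Ht. rewrite !Rminus_0_r in Ht. split.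
  - apply (is_derive_minus (D 0%nat) (fun x => D 1%nat 0 * x)).
    + apply is_derive_Reals, HD. apply Rabs_lt_between. lra.
    + auto_derive; [exact I | ring].
  - apply HD1, Ht.
Qed.

Lemma bigO2_ext (h1 h2 : R -> R) : (forall p, h1 p = h2 p) -> bigO2 h1 -> bigO2 h2.
Proof.
  intros E [C [e [He HC]]]. exists C, e; split; auto.
  intros p Hp; rewrite <- E; auto.
Qed.

Lemma bigO2_scale c (h : R -> R) : bigO2 h -> bigO2 (fun p => c * h p).
Proof.
  intros [C [e [He HC]]]. exists (Rabs c * C), e; split; auto.
  intros p Hp. rewrite Rabs_mult, Rmult_assoc.
  apply Rmult_le_compat_l; [apply Rabs_pos | auto].
Qed.

Lemma Rabs_lt_of_near p q s : Rabs (q - p) < s - Rabs p -> Rabs q < s.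
Proof.
  intros H. pose proof (Rabs_triang (q - p) p).
  replace (q - p + p) with q in * by ring. lra.
Qed.

Lemma lipschitz_continuous (f : R -> R) x e L : 0 < e -> 0 <= L ->
  (forall y, Rabs (y - x) < e -> Rabs (f y - f x) <= L * Rabs (y - x)) ->
  continuous f x.
Proof.
  intros He HL Hf. apply filterlim_locally. intros eps.
  assert (Hd : 0 < Rmin e (eps / (L + 1))).
  { apply Rmin_pos; [lra | apply Rdiv_lt_0_compat; [apply cond_pos | lra]]. }
  exists (mkposreal _ Hd). intros y Hy.
  change (Rabs (y - x) < Rmin e (eps / (L + 1))) in Hy.
  pose proof (Rmin_l e (eps / (L + 1))); pose proof (Rmin_r e (eps / (L + 1))).
  pose proof (cond_pos eps). pose proof (Rabs_pos (y - x)).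
  assert (Heps : eps / (L + 1) * (L + 1) = eps) by (field; lra).
  change (Rabs (f y - f x) < eps).
  apply Rle_lt_trans with (L * Rabs (y - x)); [apply Hf; lra | nra].
Qed.

Lemma derivable_pt_lim_of_slope (f sl : R -> R) p e : 0 < e -> continuous sl p ->
  (forall q, q <> p -> Rabs (q - p) < e -> (f q - f p) / (q - p) = sl q) ->
  derivable_pt_lim f p (sl p).
Proof.
  intros He Hc Hsl eps Heps.
  destruct (proj1 (filterlim_locally sl (sl p)) Hc (mkposreal eps Heps)) as [r Hr].
  assert (Hm : 0 < Rmin r e) by (apply Rmin_pos; [apply cond_pos | lra]).
  exists (mkposreal _ Hm). intros h Hh0 Hh. simpl in Hh.
  pose proof (Rmin_l r e); pose proof (Rmin_r r e).
  specialize (Hsl (p + h)). replace (p + h - p) with h in Hsl by ring.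
  rewrite Hsl by (lra || (intro; apply Hh0; lra)).
  apply (Hr (p + h)). change (Rabs (p + h - p) < r).
  replace (p + h - p) with h by ring. lra.
Qed.

Definition jointly_continuous (A : R -> R -> R -> R) : Prop :=
  forall x y z e, 0 < e -> exists r, 0 < r /\ forall x' y' z',
    Rabs (x' - x) < r -> Rabs (y' - y) < r -> Rabs (z' - z) < r ->
    Rabs (A x' y' z' - A x y z) < e.

Lemma jointly_continuous_of_continuous (A : R -> R -> R -> R) :
  (forall x y z, continuous (fun v : R * (R * R) => A (fst v) (fst (snd v)) (snd (snd v)))
                            (x, (y, z))) ->
  jointly_continuous A.
Proof.
  intros HA x y z e He.
  destruct (HA x y z (ball (A x y z) (mkposreal e He)) (locally_ball _ _)) as [r Hr].
  exists r; split; [apply cond_pos|]. intros x' y' z' Hx Hy Hz.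
  exact (Hr (x', (y', z')) (conj Hx (conj Hy Hz))).
Qed.

Lemma jointly_continuous_comp (A : R -> R -> R -> R) (u v w : R -> R) t :
  jointly_continuous A -> continuous u t -> continuous v t -> continuous w t ->
  continuous (fun s => A (u s) (v s) (w s)) t.
Proof.
  intros HA Hu Hv Hw. apply filterlim_locally. intros eps.
  destruct (HA (u t) (v t) (w t) eps (cond_pos eps)) as [r [Hr Hball]].
  set (rp := mkposreal r Hr).
  pose proof (proj1 (filterlim_locally u (u t)) Hu rp) as Hu'.
  pose proof (proj1 (filterlim_locally v (v t)) Hv rp) as Hv'.
  pose proof (proj1 (filterlim_locally w (w t)) Hw rp) as Hw'.
  generalize (filter_and _ _ Hu' (filter_and _ _ Hv' Hw')). apply filter_imp.
  intros s [Hus [Hvs Hws]]. apply Hball; assumption.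
Qed.

Definition Ck_stable (A : R -> R -> R -> R) : Prop :=
  forall a b k (u v w : R -> R), Ck_on a b k u -> Ck_on a b k v -> Ck_on a b k w ->
    Ck_on a b k (fun t => A (u t) (v t) (w t)).

Section ImplicitFunction.
Variables (G : R -> R -> R) (A B : R -> R -> R -> R) (x0 : R).
Hypothesis G_divdiff_x : forall x y p, G x p - G y p = (x - y) * A x y p.
Hypothesis G_divdiff_p : forall x p q, G x q - G x p = (q - p) * B x p q.
Hypothesis G_continuous : forall p, continuity (fun x => G x p).
Hypothesis A_continuous : jointly_continuous A.
Hypothesis B_continuous : jointly_continuous B.
Hypothesis A_Ck_stable : Ck_stable A.
Hypothesis B_Ck_stable : Ck_stable B.
Hypothesis G_root : G x0 0 = 0.
Hypothesis A_neg : A x0 x0 0 < 0.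

Lemma divdiff_bounds : exists r c K, 0 < r /\ 0 < c /\ 0 <= K /\
  (forall x y p, Rabs (x - x0) <= r -> Rabs (y - x0) <= r -> Rabs p <= r -> A x y p <= - c) /\
  (forall x p q, Rabs (x - x0) <= r -> Rabs p <= r -> Rabs q <= r -> Rabs (B x p q) <= K).
Proof.
  set (c := - A x0 x0 0 / 2).
  destruct (A_continuous x0 x0 0 c) as [rA [HrA HA]]; [unfold c; lra|].
  destruct (B_continuous x0 0 0 1) as [rB [HrB HB]]; [lra|].
  pose proof (Rmin_l rA rB); pose proof (Rmin_r rA rB).
  assert (Hm : 0 < Rmin rA rB) by (apply Rmin_pos; auto).
  exists (Rmin rA rB / 2), c, (Rabs (B x0 0 0) + 1).
  pose proof (Rabs_pos (B x0 0 0)).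
  split; [lra | split; [unfold c; lra | split; [lra | split]]].
  - intros x y p Hx Hy Hp.
    specialize (HA x y p ltac:(lra) ltac:(lra) ltac:(rewrite Rminus_0_r; lra)).
    apply Rabs_def2 in HA. unfold c in *; lra.
  - intros x p q Hx Hp Hq.
    specialize (HB x p q ltac:(lra) ltac:(rewrite Rminus_0_r; lra) ltac:(rewrite Rminus_0_r; lra)).
    pose proof (Rabs_triang_inv (B x p q) (B x0 0 0)). lra.
Qed.

Section Box.
Variables r c K : R.
Hypothesis r_pos : 0 < r.
Hypothesis c_pos : 0 < c.
Hypothesis K_nonneg : 0 <= K.
Hypothesis A_le : forall x y p,
  Rabs (x - x0) <= r -> Rabs (y - x0) <= r -> Rabs p <= r -> A x y p <= - c.
Hypothesis B_bound : forall x p q,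
  Rabs (x - x0) <= r -> Rabs p <= r -> Rabs q <= r -> Rabs (B x p q) <= K.

Definition sol_radius : R := Rmin r (r * c / (K + 1)).

Lemma sol_radius_pos : 0 < sol_radius.
Proof. apply Rmin_pos; [lra | apply Rdiv_lt_0_compat; nra]. Qed.

Lemma sol_radius_le : sol_radius <= r.
Proof. apply Rmin_l. Qed.

Lemma sol_radius_B p : Rabs p < sol_radius -> Rabs p * K < r * c.
Proof.
  intros Hp. pose proof (Rmin_r r (r * c / (K + 1))). pose proof (Rabs_pos p).
  assert (Hq : r * c / (K + 1) * (K + 1) = r * c) by (field; lra).
  assert (0 < r * c / (K + 1)) by (apply Rdiv_lt_0_compat; nra).
  unfold sol_radius in Hp. nra.
Qed.

Lemma G_root_unique x y p : Rabs (x - x0) <= r -> Rabs (y - x0) <= r -> Rabs p <= r ->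
  G x p = 0 -> G y p = 0 -> x = y.
Proof.
  intros Hx Hy Hp Gx Gy.
  pose proof (G_divdiff_x x y p) as E. rewrite Gx, Gy in E.
  pose proof (A_le x y p Hx Hy Hp).
  destruct (Rmult_integral (x - y) (A x y p)); lra.
Qed.

Lemma G_root_exists p : Rabs p < sol_radius -> {x | Rabs (x - x0) <= r /\ G x p = 0}.
Proof.
  intros Hp. pose proof sol_radius_le. pose proof (sol_radius_B p Hp).
  assert (Hrr : Rabs (x0 - x0) <= r) by (rewrite Rminus_diag, Rabs_R0; lra).
  assert (HG0 : Rabs (G x0 p) <= Rabs p * K).
  { pose proof (G_divdiff_p x0 0 p) as E. rewrite G_root, !Rminus_0_r in E.
    rewrite E, Rabs_mult. apply Rmult_le_compat_l; [apply Rabs_pos|].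
    apply B_bound; rewrite ?Rabs_R0; lra. }
  apply Rabs_le_between in HG0.
  (* G(., p) decreases with slope at least c across [x0 - r, x0 + r] *)
  assert (Hleft : 0 < G (x0 - r) p).
  { pose proof (G_divdiff_x (x0 - r) x0 p) as E.
    assert (A (x0 - r) x0 p <= - c)
      by (apply A_le; [replace (x0 - r - x0) with (- r) by ring;
                       rewrite Rabs_Ropp, Rabs_right | | ]; lra).
    nra. }
  assert (Hright : G (x0 + r) p < 0).
  { pose proof (G_divdiff_x (x0 + r) x0 p) as E.
    assert (A (x0 + r) x0 p <= - c)
      by (apply A_le; [replace (x0 + r - x0) with r by ring; rewrite Rabs_right | | ]; lra).
    nra. }
  destruct (IVT (- (fun x => G x p))%F (x0 - r) (x0 + r)) as [x [Hx Gx]].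
  - apply continuity_opp, G_continuous.
  - lra.
  - unfold opp_fct; lra.
  - unfold opp_fct; lra.
  - exists x. unfold opp_fct in Gx. split; [apply Rabs_le; lra | lra].
Qed.

(* The value x0 outside (-sol_radius, sol_radius) is a placeholder. *)
Definition implicit_sol (p : R) : R :=
  match Rlt_dec (Rabs p) sol_radius with
  | left Hp => proj1_sig (G_root_exists p Hp)
  | right _ => x0
  end.

Lemma implicit_sol_spec p : Rabs p < sol_radius ->
  Rabs (implicit_sol p - x0) <= r /\ G (implicit_sol p) p = 0.
Proof.
  intros Hp. unfold implicit_sol.
  destruct (Rlt_dec (Rabs p) sol_radius) as [H|H]; [|contradiction].
  exact (proj2_sig (G_root_exists p H)).
Qed.

Lemma implicit_sol_0 : implicit_sol 0 = x0.
Proof.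
  pose proof sol_radius_pos. pose proof sol_radius_le.
  destruct (implicit_sol_spec 0) as [H1 H2]; [rewrite Rabs_R0; lra|].
  apply (G_root_unique _ _ 0); rewrite ?Rminus_diag, ?Rabs_R0; auto; lra.
Qed.

Lemma implicit_sol_lipschitz p q : Rabs p < sol_radius -> Rabs q < sol_radius ->
  Rabs (implicit_sol q - implicit_sol p) <= K / c * Rabs (q - p).
Proof.
  intros Hp Hq. pose proof sol_radius_le.
  destruct (implicit_sol_spec p Hp) as [Hp1 Hp2], (implicit_sol_spec q Hq) as [Hq1 Hq2].
  set (dp := implicit_sol p) in *; set (dq := implicit_sol q) in *.
  pose proof (G_divdiff_x dq dp q) as Ex. pose proof (G_divdiff_p dp p q) as Ep.
  pose proof (A_le dq dp q Hq1 Hp1 ltac:(lra)) as HA.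
  pose proof (B_bound dp p q Hp1 ltac:(lra) ltac:(lra)) as HB.
  assert (E : Rabs (dq - dp) * Rabs (A dq dp q) = Rabs (q - p) * Rabs (B dp p q)).
  { rewrite <- !Rabs_mult. replace ((dq - dp) * A dq dp q) with (- ((q - p) * B dp p q)) by lra.
    apply Rabs_Ropp. }
  rewrite (Rabs_left (A dq dp q)) in E by lra.
  pose proof (Rabs_pos (q - p)); pose proof (Rabs_pos (dq - dp)).
  apply Rmult_le_reg_r with c; auto.
  replace (K / c * Rabs (q - p) * c) with (K * Rabs (q - p)) by (field; lra).
  nra.
Qed.

Lemma implicit_sol_continuous p : Rabs p < sol_radius -> continuous implicit_sol p.
Proof.
  intros Hp. apply (lipschitz_continuous _ _ (sol_radius - Rabs p) (K / c)); [lra | |].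
  - apply Rdiv_le_0_compat; lra.
  - intros q Hq. apply implicit_sol_lipschitz; auto. apply (Rabs_lt_of_near p); lra.
Qed.

Lemma implicit_sol_derive p : Rabs p < sol_radius ->
  derivable_pt_lim implicit_sol p
    (- B (implicit_sol p) p p / A (implicit_sol p) (implicit_sol p) p).
Proof.
  intros Hp. pose proof sol_radius_le.
  destruct (implicit_sol_spec p Hp) as [Hp1 Hp2].
  set (d := implicit_sol) in *.
  apply (derivable_pt_lim_of_slope d (fun q => - B (d p) p q / A (d q) (d p) q) p
           (sol_radius - Rabs p)); [lra | |].
  - apply (@continuous_mult _ R_AbsRing).
    + apply (@continuous_opp _ R_AbsRing R_NormedModule (fun q => B (d p) p q)).
      apply jointly_continuous_comp; auto; apply continuous_const || apply continuous_id.
    + apply continuous_Rinv_comp.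
      * apply jointly_continuous_comp; auto.
        -- apply implicit_sol_continuous, Hp.
        -- apply continuous_const.
        -- apply continuous_id.
      * pose proof (A_le (d p) (d p) p Hp1 Hp1 ltac:(lra)). lra.
  - intros q Hqp Hq.
    assert (Hq' : Rabs q < sol_radius) by (apply (Rabs_lt_of_near p); lra).
    destruct (implicit_sol_spec q Hq') as [Hq1 Hq2]. fold d in Hq1, Hq2.
    pose proof (A_le (d q) (d p) q Hq1 Hp1 ltac:(lra)) as HA.
    (* 0 = G(d q, q) - G(d p, p), split through the point (d p, q) *)
    assert (E : (d q - d p) * A (d q) (d p) q = - ((q - p) * B (d p) p q)).
    { rewrite <- G_divdiff_x, <- G_divdiff_p. lra. }
    replace (d q - d p) with (- ((q - p) * B (d p) p q) / A (d q) (d p) q)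
      by (rewrite <- E; field; lra).
    field. split; [lra | intro; apply Hqp; lra].
Qed.

Lemma implicit_sol_Ck k : Ck_on (- sol_radius) sol_radius k implicit_sol.
Proof.
  pose proof sol_radius_le.
  induction k as [|k IH]; [exact I|].
  exists (fun p => - B (implicit_sol p) p p / A (implicit_sol p) (implicit_sol p) p). split.
  - intros p Hp. apply is_derive_Reals, implicit_sol_derive, Rabs_lt_between, Hp.
  - apply Ck_on_div.
    + intros p Hp. destruct (implicit_sol_spec p) as [Hp1 _]; [apply Rabs_lt_between, Hp|].
      pose proof (A_le _ _ p Hp1 Hp1 ltac:(apply Rabs_le; lra)). lra.
    + apply Ck_on_opp, B_Ck_stable; [exact IH | apply Ck_on_id | apply Ck_on_id].
    + apply A_Ck_stable; [exact IH | exact IH | apply Ck_on_id].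
Qed.

Lemma implicit_sol_unique g e : 0 < e -> continuous g 0 -> g 0 = x0 ->
  (forall p, Rabs p < e -> G (g p) p = 0) ->
  exists e', 0 < e' /\ forall p, Rabs p < e' -> g p = implicit_sol p.
Proof.
  intros He Hg Hg0 HG. pose proof sol_radius_pos; pose proof sol_radius_le.
  destruct (proj1 (filterlim_locally g (g 0)) Hg (mkposreal r r_pos)) as [rho Hrho].
  pose proof (cond_pos rho).
  exists (Rmin rho (Rmin e sol_radius)); split; [apply Rmin_pos; [lra | apply Rmin_pos; lra]|].
  intros p Hp.
  pose proof (Rmin_l rho (Rmin e sol_radius)); pose proof (Rmin_r rho (Rmin e sol_radius)).
  pose proof (Rmin_l e sol_radius); pose proof (Rmin_r e sol_radius).
  destruct (implicit_sol_spec p) as [Hp1 Hp2]; [lra|].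
  apply (G_root_unique _ _ p); auto; [| lra | apply HG; lra].
  assert (Hball : Rabs (p - 0) < rho) by (rewrite Rminus_0_r; lra).
  specialize (Hrho p Hball). change (Rabs (g p - g 0) < r) in Hrho.
  rewrite Hg0 in Hrho. lra.
Qed.

End Box.

Theorem implicit_function : exists s L (d : R -> R),
  0 < s /\ 0 <= L /\ d 0 = x0 /\
  (forall p, Rabs p < s -> G (d p) p = 0) /\
  (forall p, Rabs p < s -> Rabs (d p - x0) <= L * Rabs p) /\
  smooth_on (- s) s d /\
  derivable_pt_lim d 0 (- B x0 0 0 / A x0 x0 0) /\
  (forall g e, 0 < e -> continuous g 0 -> g 0 = x0 ->
     (forall p, Rabs p < e -> G (g p) p = 0) ->
     exists e', 0 < e' /\ forall p, Rabs p < e' -> g p = d p).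
Proof.
  destruct divdiff_bounds as (r & c & K & Hr & Hc & HK & HA & HB).
  pose proof (sol_radius_pos r c K Hr Hc HK) as Hs.
  pose proof (implicit_sol_0 r c K Hr Hc HK HA HB) as H0.
  exists (sol_radius r c K), (K / c), (implicit_sol r c K Hr Hc HK HA HB).
  split; [exact Hs | split; [apply Rdiv_le_0_compat; lra | split; [exact H0 |]]].
  split; [intros; apply implicit_sol_spec; auto|].
  split.
  { intros p Hp. pose proof (implicit_sol_lipschitz r c K Hr Hc HK HA HB 0 p) as Hlip.
    rewrite H0, Rminus_0_r, Rabs_R0 in Hlip. auto. }
  split; [apply smooth_on_Ck_on, implicit_sol_Ck|].
  split.
  { pose proof (implicit_sol_derive r c K Hr Hc HK HA HB 0) as Hd.
    rewrite H0 in Hd. apply Hd. rewrite Rabs_R0; exact Hs. }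
  intros g e He Hg Hg0 HG. apply (implicit_sol_unique r c K Hr Hc HK HA HB g e); auto.
Qed.

End ImplicitFunction.

Definition F_lin (n : nat) (delta phi : R) : R :=
  (INR n - 2) * (INR n + delta) - 2 * phi * (INR n - 1) * delta.

Definition F_quad (n : nat) (delta phi : R) : R :=
  (2 - delta) * (INR n + delta) + 2 * phi * (INR n - 1) * delta.

Definition F_divdiff_delta (n : nat) (tau gamma x y phi : R) : R :=
  tau * ((INR n - 2 - 2 * phi * (INR n - 1)) * F_quad n x phi
         + F_lin n y phi * (2 - INR n + 2 * phi * (INR n - 1) - x - y))
  - gamma * (x * x + x * y + y * y + 2 * INR n * (x + y) + INR n * INR n).

Definition F_divdiff_phi (n : nat) (tau delta phi psi : R) : R :=
  tau * (2 * (INR n - 1) * delta) * (F_lin n delta phi - F_quad n delta psi).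

Lemma F_sub_delta n tau gamma x y phi :
  F n tau gamma x phi - F n tau gamma y phi = (x - y) * F_divdiff_delta n tau gamma x y phi.
Proof. unfold F, F_divdiff_delta, F_lin, F_quad. ring. Qed.

Lemma F_sub_phi n tau gamma delta phi psi :
  F n tau gamma delta psi - F n tau gamma delta phi
  = (psi - phi) * F_divdiff_phi n tau delta phi psi.
Proof. unfold F, F_divdiff_phi, F_lin, F_quad. ring. Qed.

Lemma F_continuous_delta n tau gamma phi : continuity (fun delta => F n tau gamma delta phi).
Proof. unfold F. reg. Qed.

Ltac continuous_poly :=
  repeat match goal with
  | |- continuous (fun _ => _ + _) _ => apply @continuous_plus with (V := R_NormedModule)
  | |- continuous (fun _ => _ * _) _ => apply @continuous_mult with (K := R_AbsRing)
  | |- continuous (fun _ => - _) _ => apply @continuous_opp with (V := R_NormedModule)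
  | |- continuous (fun _ => fst _) _ => apply continuous_fst
  | |- continuous (fun _ => fst (snd _)) _ => apply (continuous_comp snd fst)
  | |- continuous (fun _ => snd (snd _)) _ => apply (continuous_comp snd snd)
  | |- continuous snd _ => apply continuous_snd
  | |- continuous fst _ => apply continuous_fst
  | |- continuous (fun _ => _) _ => apply continuous_const
  end.

Ltac Ck_on_poly :=
  repeat match goal with
  | |- Ck_on _ _ _ (fun _ => _ + _) => apply Ck_on_plus
  | |- Ck_on _ _ _ (fun _ => _ * _) => apply Ck_on_mult
  | |- Ck_on _ _ _ (fun _ => - _) => apply Ck_on_opp
  | H : Ck_on ?a ?b ?k _ |- Ck_on ?a ?b ?k _ => exact H
  | |- Ck_on _ _ _ (fun _ => _) => apply Ck_on_const
  end.

Lemma F_divdiff_delta_continuous n tau gamma : jointly_continuous (F_divdiff_delta n tau gamma).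
Proof.
  apply jointly_continuous_of_continuous. intros.
  unfold F_divdiff_delta, F_quad, F_lin, Rminus. continuous_poly.
Qed.

Lemma F_divdiff_phi_continuous n tau : jointly_continuous (F_divdiff_phi n tau).
Proof.
  apply jointly_continuous_of_continuous. intros.
  unfold F_divdiff_phi, F_quad, F_lin, Rminus. continuous_poly.
Qed.

Lemma F_divdiff_delta_Ck_stable n tau gamma : Ck_stable (F_divdiff_delta n tau gamma).
Proof.
  intros a b k u v w Hu Hv Hw.
  unfold F_divdiff_delta, F_quad, F_lin, Rminus. Ck_on_poly.
Qed.

Lemma F_divdiff_phi_Ck_stable n tau : Ck_stable (F_divdiff_phi n tau).
Proof.
  intros a b k u v w Hu Hv Hw.
  unfold F_divdiff_phi, F_quad, F_lin, Rminus. Ck_on_poly.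
Qed.

Section Coefficients.
Variables (n : nat) (tau gamma : R).
Hypothesis n_ge2 : 2 <= INR n.
Hypothesis tau_pos : 0 < tau.
Hypothesis gamma_pos : 0 < gamma.

Lemma delta0_nonneg : 0 <= delta0 n tau gamma.
Proof.
  unfold delta0. apply Rmult_le_pos; [nra | left; apply Rinv_0_lt_compat; nra].
Qed.

Lemma F_delta0 : F n tau gamma (delta0 n tau gamma) 0 = 0.
Proof. unfold F, delta0. field. nra. Qed.

Lemma F_divdiff_delta_delta0 :
  F_divdiff_delta n tau gamma (delta0 n tau gamma) (delta0 n tau gamma) 0
  = - (INR n + delta0 n tau gamma) ^ 2 * (tau * (INR n - 2) + gamma).
Proof. unfold F_divdiff_delta, F_quad, F_lin, delta0. field. nra. Qed.

Lemma F_divdiff_delta_delta0_neg :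
  F_divdiff_delta n tau gamma (delta0 n tau gamma) (delta0 n tau gamma) 0 < 0.
Proof.
  rewrite F_divdiff_delta_delta0. pose proof delta0_nonneg.
  assert (0 < (INR n + delta0 n tau gamma) ^ 2) by (apply pow_lt; lra).
  assert (0 < tau * (INR n - 2) + gamma) by nra.
  rewrite Ropp_mult_distr_l_reverse. apply Ropp_lt_gt_0_contravar, Rmult_lt_0_compat; auto.
Qed.

Lemma delta_slope_delta0 :
  - F_divdiff_phi n tau (delta0 n tau gamma) 0 0
    / F_divdiff_delta n tau gamma (delta0 n tau gamma) (delta0 n tau gamma) 0
  = 2 * tau * (INR n - 1) * delta0 n tau gamma * (INR n - 4 + delta0 n tau gamma)
    / (gamma * (INR n + 3 * delta0 n tau gamma)
       + tau * (INR n - 2) * (INR n + 3 * delta0 n tau gamma - 4)).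
Proof.
  rewrite F_divdiff_delta_delta0. pose proof delta0_nonneg.
  set (N := INR n) in *. set (d0 := delta0 n tau gamma) in *.
  assert (Hd0 : d0 * (gamma + tau * (N - 2)) = 2 * tau * (N - 2))
    by (unfold d0, delta0; fold N; field; nra).
  (* the denominator factors through the defining relation of delta0 *)
  replace (gamma * (N + 3 * d0) + tau * (N - 2) * (N + 3 * d0 - 4))
    with ((gamma + tau * (N - 2)) * (N + d0)) by nra.
  unfold F_divdiff_phi, F_lin, F_quad. fold N. field. split; nra.
Qed.

Lemma alpha_slope_delta0 :
  4 * tau * (INR n - 1) * (INR n - 2) / (tau * (INR n + 2) * (INR n - 2) + gamma * INR n)
  = (INR n - 1) * (2 * delta0 n tau gamma / (INR n + delta0 n tau gamma)).
Proof.
  assert (0 < gamma + tau * (INR n - 2)) by nra.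
  unfold delta0. field. split; [lra | nra].
Qed.

End Coefficients.

Lemma alpha_expansion n (d : R -> R) x0 s L : 2 <= INR n -> 0 <= x0 -> 0 < s -> 0 <= L ->
  (forall p, Rabs p < s -> Rabs (d p - x0) <= L * Rabs p) ->
  bigO2 (fun phi => alpha n (d phi) phi
                    - (INR n - 2 - phi * ((INR n - 1) * (2 * x0 / (INR n + x0))))).
Proof.
  intros HN Hx0 Hs HL Hd. set (N := INR n) in *.
  exists (2 * (N - 1) * L), (Rmin s (1 / (L + 1))).
  split; [apply Rmin_pos; [lra | apply Rdiv_lt_0_compat; lra]|].
  intros p Hp. pose proof (Rmin_l s (1 / (L + 1))); pose proof (Rmin_r s (1 / (L + 1))).
  pose proof (Hd p ltac:(lra)) as Hdp. set (u := d p) in *.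
  pose proof (Rabs_pos p). pose proof (Rabs_pos (u - x0)).
  assert (HL1 : 1 / (L + 1) * (L + 1) = 1) by (field; lra).
  assert (Hu : Rabs (u - x0) < 1) by nra.
  apply Rabs_lt_between in Hu.
  set (Z := 2 * N * (N - 1) / ((N + u) * (N + x0))).
  unfold alpha; fold N.
  replace (N - 2 - (N - 1) * p * (2 * u / (N + u)) - (N - 2 - p * ((N - 1) * (2 * x0 / (N + x0)))))
    with (- (p * (u - x0) * Z)) by (unfold Z; field; lra).
  (* N + u >= 1 and N + x0 >= N *)
  assert (HZ : 0 <= Z <= 2 * (N - 1)).
  { unfold Z. split.
    - apply Rdiv_le_0_compat; nra.
    - apply Rmult_le_reg_r with ((N + u) * (N + x0)); [nra|].
      unfold Rdiv. rewrite Rmult_assoc, Rinv_l by nra.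
      assert (N <= (N + u) * (N + x0)) by nra. nra. }
  rewrite Rabs_Ropp, !Rabs_mult, (Rabs_right Z) by lra.
  replace (2 * (N - 1) * L * p ^ 2) with (Rabs p * (L * Rabs p) * (2 * (N - 1)))
    by (rewrite <- (Rabs_right (p ^ 2)), <- RPow_abs by nra; ring).
  apply Rle_trans with (Rabs p * (L * Rabs p) * Z).
  - apply Rmult_le_compat_r; [lra | apply Rmult_le_compat_l; auto].
  - apply Rmult_le_compat_l; [apply Rmult_le_pos; [| apply Rmult_le_pos] | ]; lra.
Qed.

Theorem mainTheorem8 (n : nat) (tau gamma : R) :
  (2 <= n)%nat -> 0 < tau -> 0 < gamma ->
  exists (eps : R) (d : R -> R),
    0 < eps /\
    smooth_on (- eps) eps d /\
    d 0 = delta0 n tau gamma /\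
    (forall phi, - eps < phi < eps -> F n tau gamma (d phi) phi = 0) /\
    (forall (eps' : R) (g : R -> R),
        0 < eps' -> smooth_on (- eps') eps' g -> g 0 = delta0 n tau gamma ->
        (forall phi, - eps' < phi < eps' -> F n tau gamma (g phi) phi = 0) ->
        exists eps'', 0 < eps'' /\
          forall phi, - eps'' < phi < eps'' -> g phi = d phi) /\
    bigO2 (fun phi => d phi -
      (delta0 n tau gamma
       + phi * (2 * tau * (INR n - 1) * delta0 n tau gamma
                  * (INR n - 4 + delta0 n tau gamma)
                / (gamma * (INR n + 3 * delta0 n tau gamma)
                   + tau * (INR n - 2) * (INR n + 3 * delta0 n tau gamma - 4))))) /\
    bigO2 (fun phi => alpha n (d phi) phi -
      ((INR n - 2)
       - phi * (4 * tau * (INR n - 1) * (INR n - 2)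
                / (tau * (INR n + 2) * (INR n - 2) + gamma * INR n)))) /\
    bigO2 (fun phi => Rcci tau gamma (alpha n (d phi) phi) -
      ((INR n - 2) * tau / gamma
       - phi * (tau / gamma)
           * (4 * tau * (INR n - 1) * (INR n - 2)
              / (tau * (INR n + 2) * (INR n - 2) + gamma * INR n)))).
Proof.
  intros Hn Htau Hgamma.
  assert (HN : 2 <= INR n) by (apply le_INR in Hn; simpl in Hn; lra).
  destruct (implicit_function (F n tau gamma) (F_divdiff_delta n tau gamma) (F_divdiff_phi n tau)
              (delta0 n tau gamma) (F_sub_delta n tau gamma) (F_sub_phi n tau gamma)
              (F_continuous_delta n tau gamma) (F_divdiff_delta_continuous n tau gamma)
              (F_divdiff_phi_continuous n tau) (F_divdiff_delta_Ck_stable n tau gamma)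
              (F_divdiff_phi_Ck_stable n tau) (F_delta0 n tau gamma HN Htau Hgamma)
              (F_divdiff_delta_delta0_neg n tau gamma HN Htau Hgamma))
    as (s & L & d & Hs & HL & Hd0 & Hroot & Hlip & Hsmooth & Hder & Huniq).
  rewrite delta_slope_delta0 in Hder by auto.
  pose proof (alpha_expansion n d _ s L HN (delta0_nonneg n tau gamma HN Htau Hgamma) Hs HL Hlip)
    as Halpha.
  rewrite <- alpha_slope_delta0 in Halpha by auto.
  set (ca := 4 * tau * (INR n - 1) * (INR n - 2)
             / (tau * (INR n + 2) * (INR n - 2) + gamma * INR n)) in *.
  exists s, d. do 3 (split; auto). split; [|split; [|split; [|split]]].
  - intros phi Hphi. apply Hroot, Rabs_lt_between, Hphi.
  - intros e g He Hg Hg0 HgF.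
    pose proof (smooth_on_continuous (- e) e g 0 ltac:(lra) Hg) as Hg_cont.
    destruct (Huniq g e He Hg_cont Hg0) as (e' & He' & Hge).
    { intros p Hp. apply HgF, Rabs_lt_between, Hp. }
    exists e'; split; auto. intros phi Hphi. apply Hge, Rabs_lt_between, Hphi.
  - apply (smooth_on_taylor1 s); auto.
  - exact Halpha.
  - apply (bigO2_ext (fun phi => tau / gamma * (alpha n (d phi) phi - (INR n - 2 - phi * ca)))).
    + intros phi. unfold Rcci. field. lra.
    + apply bigO2_scale, Halpha.
Qed.
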